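(* For every group $G$ and every ring $k$, the set $D^1(k[G])$ with its addition and multiplication is a ring with unit $(1_G,0)$ and zero element $(0,0)$.
   Context: For a ring $k$ and group $G$, $k[G]$ is the group ring, and $(k[G])[G]$ is the set of finitely supported maps $\beta\colon G\to k[G]$, $g\mapsto\beta(g)$, with $\beta(g)(h)\in k$. $D^1(k[G])=k[G]\times(k[G])[G]$ with componentwise addition and multiplication $(\alpha_1,\beta_1)*(\alpha_2,\beta_2)=(\alpha_1\alpha_2,\ \alpha_1\beta_2+\beta_1\alpha_2+\beta_1\beta_2)$, where $\alpha_1\alpha_2$ is the group ring product and, for $\alpha\in k[G]$, $\beta,\gamma\in(k[G])[G]$, $g,h\in G$: $(\alpha\beta)(g)(h)=\sum_{t\in G}\alpha(t)\beta(gt)(t^{-1}h)$, $(\beta\alpha)(g)(h)=\sum_{t\in G}\beta(g)(t)\alpha(t^{-1}h)$, $(\beta\gamma)(g)(h)=\sum_{t\in G}\beta(g)(t)\gamma(gt)(t^{-1}h)$. *)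

From HB Require Import structures.
From mathcomp Require Import all_boot all_order all_algebra.
From mathcomp Require Import boolp classical_sets cardinality fsbigop.
Set Implicit Arguments. Unset Strict Implicit. Unset Printing Implicit Defensive.
Import Order.TTheory GRing.Theory Num.Theory.
Local Open Scope classical_set_scope.
Local Open Scope ring_scope.

(* G : groupType (monoid.v) is an arbitrary, possibly infinite, group;
   its operations are written with the group_scope notations (%g). *)

Section D1.
Variables (k : pzRingType) (G : groupType).

(* Elements of k[G] are represented by maps G -> k; an element of (k[G])[G]
   by a map G -> (G -> k), beta g h = beta(g)(h). *)

Definition fsupp (a : G -> k) : Prop := finite_set [set g | a g != 0].
Definition fsupp2 (b : G -> G -> k) : Prop :=
  finite_set [set g | exists h, b g h != 0] /\ forall g, fsupp (b g).

Definition gr_zero : G -> k := fun _ => 0.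
Definition gr_one : G -> k := fun g => if (g == 1%g) then 1 else 0.
Definition gr_add (a b : G -> k) : G -> k := fun g => a g + b g.
Definition gr_opp (a : G -> k) : G -> k := fun g => - a g.
Definition gr_mul (a b : G -> k) : G -> k :=
  fun h => \sum_(t \in [set: G]) (a t * b (t^-1 * h)%g).

Definition gr2_zero : G -> G -> k := fun _ _ => 0.
Definition gr2_add (b c : G -> G -> k) : G -> G -> k := fun g h => b g h + c g h.
Definition gr2_opp (b : G -> G -> k) : G -> G -> k := fun g h => - b g h.
Definition lact (a : G -> k) (b : G -> G -> k) : G -> G -> k :=
  fun g h => \sum_(t \in [set: G]) (a t * b (g * t)%g (t^-1 * h)%g).
Definition ract (b : G -> G -> k) (a : G -> k) : G -> G -> k :=
  fun g h => \sum_(t \in [set: G]) (b g t * a (t^-1 * h)%g).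
Definition mul2 (b c : G -> G -> k) : G -> G -> k :=
  fun g h => \sum_(t \in [set: G]) (b g t * c (g * t)%g (t^-1 * h)%g).

Definition D1 := ((G -> k) * (G -> G -> k))%type.
Definition inD1 (x : D1) : Prop := fsupp x.1 /\ fsupp2 x.2.

Definition D1_zero : D1 := (gr_zero, gr2_zero).
Definition D1_one : D1 := (gr_one, gr2_zero).
Definition D1_add (x y : D1) : D1 := (gr_add x.1 y.1, gr2_add x.2 y.2).
Definition D1_opp (x : D1) : D1 := (gr_opp x.1, gr2_opp x.2).
Definition D1_mul (x y : D1) : D1 :=
  (gr_mul x.1 y.1,
   gr2_add (gr2_add (lact x.1 y.2) (ract x.2 y.1)) (mul2 x.2 y.2)).

Definition D1_is_ring : Prop :=
  inD1 D1_zero /\ inD1 D1_one /\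
  (forall x y, inD1 x -> inD1 y -> inD1 (D1_add x y)) /\
  (forall x, inD1 x -> inD1 (D1_opp x)) /\
  (forall x y, inD1 x -> inD1 y -> inD1 (D1_mul x y)) /\
  (forall x y z, inD1 x -> inD1 y -> inD1 z ->
     D1_add x (D1_add y z) = D1_add (D1_add x y) z) /\
  (forall x y, inD1 x -> inD1 y -> D1_add x y = D1_add y x) /\
  (forall x, inD1 x -> D1_add D1_zero x = x) /\
  (forall x, inD1 x -> D1_add (D1_opp x) x = D1_zero) /\
  (forall x y z, inD1 x -> inD1 y -> inD1 z ->
     D1_mul x (D1_mul y z) = D1_mul (D1_mul x y) z) /\
  (forall x, inD1 x -> D1_mul D1_one x = x) /\
  (forall x, inD1 x -> D1_mul x D1_one = x) /\
  (forall x y z, inD1 x -> inD1 y -> inD1 z ->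
     D1_mul (D1_add x y) z = D1_add (D1_mul x z) (D1_mul y z)) /\
  (forall x y z, inD1 x -> inD1 y -> inD1 z ->
     D1_mul x (D1_add y z) = D1_add (D1_mul x y) (D1_mul x z)).
End D1.

(* Regard alpha in k[G] as the constant family g |-> alpha and send (alpha, beta) in
   D^1(k[G]) to the family alpha + beta : G -> k[G].  All four products occurring in
   the multiplication of D^1(k[G]) are instances of the single twisted convolution
   (beta gamma)(g)(h) = sum_t beta(g)(t) gamma(gt)(t^-1 h), so this map turns the
   multiplication of D^1(k[G]) into that convolution; it is additive, and injective
   on pairs with the same first component.  The ring axioms therefore reduce to
   bilinearity, unit laws and associativity of the convolution on families with
   finitely supported rows; associativity is a Fubini exchange over a finite
   rectangle followed by the substitution t = s u. *)

From mathcomp Require Import all_boot all_algebra.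
From mathcomp Require Import boolp classical_sets cardinality fsbigop.
Set Implicit Arguments. Unset Strict Implicit. Unset Printing Implicit Defensive.
Import GRing.Theory.
Local Open Scope classical_set_scope.
Local Open Scope ring_scope.

Lemma mulr_neq0_factors (R : pzSemiRingType) (x y : R) :
  x * y != 0 -> x != 0 /\ y != 0.
Proof. by move=> xy0; split; apply: contraNneq xy0 => ->; rewrite ?mul0r ?mulr0. Qed.

Lemma fsumT_restrict (T : choiceType) (R : nmodType) (S : set T) (f : T -> R) :
  [set t | f t != 0] `<=` S -> \sum_(t \in [set: T]) f t = \sum_(t \in S) f t.
Proof.
move=> fS; apply/esym/fsbig_widen => // t [_ /= St].
by apply: contra_notP St => ft0; apply: fS; apply/eqP.
Qed.

Lemma fsum_neq0 (T : choiceType) (R : nmodType) (A : set T) (f : T -> R) :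
  \sum_(t \in A) f t != 0 -> exists2 t, A t & f t != 0.
Proof. exact: (@fsbigN1 R 0 +%R unit T A (fun _ => f) tt). Qed.

Lemma fsumT_delta (T : choiceType) (R : nmodType) (f : T -> R) (s : T) :
  (forall t, t != s -> f t = 0) -> \sum_(t \in [set: T]) f t = f s.
Proof.
move=> fs; rewrite (fsumT_restrict (S := [set s])) ?fsbig_set1 // => t /=.
by apply: contraNeq => /fs ->.
Qed.

Lemma supp_add_sub (T : Type) (R : nmodType) (f g : T -> R) :
  [set t | f t + g t != 0] `<=` [set t | f t != 0] `|` [set t | g t != 0].
Proof.
move=> t /=; apply: contraNP => /not_orP[/negP/negPn/eqP -> /negP/negPn/eqP ->].
by rewrite addr0.
Qed.

Lemma fsumTD (T : choiceType) (R : nmodType) (f g : T -> R) :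
  finite_set [set t | f t != 0] -> finite_set [set t | g t != 0] ->
  \sum_(t \in [set: T]) (f t + g t) =
  \sum_(t \in [set: T]) f t + \sum_(t \in [set: T]) g t.
Proof.
move=> ff fg; set S := [set t | f t != 0] `|` [set t | g t != 0].
have fS : finite_set S by rewrite finite_setU.
have supp_f : [set t | f t != 0] `<=` S by move=> t; left.
have supp_g : [set t | g t != 0] `<=` S by move=> t; right.
have supp_fg := supp_add_sub (f := f) (g := g).
by rewrite !(fsumT_restrict (S := S)) ?fsbig_split.
Qed.

Lemma fsumTMl (T : choiceType) (R : pzSemiRingType) (c : R) (f : T -> R) :
  finite_set [set t | f t != 0] ->
  \sum_(t \in [set: T]) c * f t = c * \sum_(t \in [set: T]) f t.
Proof.
move=> ff; rewrite !(fsumT_restrict (S := [set t | f t != 0])) ?fsbig_distrr //.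
by move=> t /mulr_neq0_factors[].
Qed.

Lemma fsumTMr (T : choiceType) (R : pzSemiRingType) (c : R) (f : T -> R) :
  finite_set [set t | f t != 0] ->
  \sum_(t \in [set: T]) f t * c = (\sum_(t \in [set: T]) f t) * c.
Proof.
move=> ff; rewrite !(fsumT_restrict (S := [set t | f t != 0])) //.
  by rewrite !fsbig_finite // big_distrl.
by move=> t /mulr_neq0_factors[].
Qed.

Lemma fsumT2_restrict (T T' : choiceType) (R : nmodType) (F : T -> T' -> R)
    (P : set T) (Q : set T') :
  (forall i j, F i j != 0 -> P i /\ Q j) ->
  \sum_(i \in [set: T]) \sum_(j \in [set: T']) F i j =
  \sum_(i \in P) \sum_(j \in Q) F i j.
Proof.
move=> FPQ; transitivity (\sum_(i \in [set: T]) \sum_(j \in Q) F i j).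
  by apply: eq_fsbigr => i _; apply: fsumT_restrict => j /FPQ[].
by apply: fsumT_restrict => i /fsum_neq0[j _ /FPQ[]].
Qed.

Lemma fsumT_exchange (T T' : choiceType) (R : nmodType) (F : T -> T' -> R)
    (P : set T) (Q : set T') :
  finite_set P -> finite_set Q -> (forall i j, F i j != 0 -> P i /\ Q j) ->
  \sum_(i \in [set: T]) \sum_(j \in [set: T']) F i j =
  \sum_(j \in [set: T']) \sum_(i \in [set: T]) F i j.
Proof.
move=> fP fQ FPQ; rewrite (fsumT2_restrict FPQ) exchange_fsbig //.
by rewrite (fsumT2_restrict (P := Q) (Q := P)) // => j i /FPQ[].
Qed.

Lemma fsumT_mulg (G : groupType) (R : nmodType) (f : G -> R) (s : G) :
  \sum_(u \in [set: G]) f u = \sum_(t \in [set: G]) f (s * t)%g.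
Proof.
by apply: reindex_fsbigT; exists (fun t => s^-1 * t)%g => t; rewrite ?mulKg ?mulVKg.
Qed.

Section TwistedConvolution.
Variables (k : pzRingType) (G : groupType).
Implicit Types (a c : G -> k) (b d e : G -> G -> k).

Definition row_fsupp b := forall g, fsupp (b g).

Definition gr2_const a : G -> G -> k := fun=> a.

Lemma fsupp_conv a (f : G -> G -> k) : fsupp a -> (forall t, fsupp (f t)) ->
  fsupp (fun h => \sum_(t \in [set: G]) a t * f t (t^-1 * h)%g).
Proof.
move=> fa ff; pose S := \bigcup_(t in [set t | a t != 0])
  [set (t * u)%g | u in [set u | f t u != 0]].
apply: (@sub_finite_set _ _ S); last first.
  by apply: bigcup_finite => // t _; apply: finite_image; apply: ff.
move=> h /= /fsum_neq0[t _ /mulr_neq0_factors[at0 ft0]].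
by exists t => //; exists (t^-1 * h)%g => //; rewrite mulVKg.
Qed.

Lemma row_fsupp_mul2 b d : row_fsupp b -> row_fsupp d -> row_fsupp (mul2 b d).
Proof. by move=> fb fd g; apply: (fsupp_conv (f := fun t => d (g * t)%g)). Qed.

Lemma mul2Dl b b' d : row_fsupp b -> row_fsupp b' ->
  mul2 (gr2_add b b') d = gr2_add (mul2 b d) (mul2 b' d).
Proof.
move=> fb fb'; apply/funext => g; apply/funext => h; rewrite /mul2 /gr2_add -fsumTD.
- by apply: eq_fsbigr => t _; rewrite mulrDl.
- by apply: sub_finite_set (fb g) => t /mulr_neq0_factors[].
- by apply: sub_finite_set (fb' g) => t /mulr_neq0_factors[].
Qed.

Lemma mul2Dr b d d' : row_fsupp b ->
  mul2 b (gr2_add d d') = gr2_add (mul2 b d) (mul2 b d').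
Proof.
move=> fb; apply/funext => g; apply/funext => h; rewrite /mul2 /gr2_add -fsumTD.
- by apply: eq_fsbigr => t _; rewrite mulrDr.
- by apply: sub_finite_set (fb g) => t /mulr_neq0_factors[].
- by apply: sub_finite_set (fb g) => t /mulr_neq0_factors[].
Qed.

Lemma mul2A b d e : row_fsupp b -> row_fsupp d ->
  mul2 (mul2 b d) e = mul2 b (mul2 d e).
Proof.
move=> fb fd; apply/funext => g; apply/funext => h; rewrite /mul2.
pose P := [set s | b g s != 0]; have fP : finite_set P := fb g.
pose Q := \bigcup_(s in P) [set (s * u)%g | u in [set u | d (g * s)%g u != 0]].
have fQ : finite_set Q.
  by apply: bigcup_finite => [|s _]; [exact: fb | apply: finite_image; exact: fd].
transitivity (\sum_(t \in [set: G]) \sum_(s \in [set: G])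
    b g s * d (g * s)%g (s^-1 * t)%g * e (g * t)%g (t^-1 * h)%g).
  apply: eq_fsbigr => t _; rewrite fsumTMr //.
  by apply: sub_finite_set (fb g) => s /mulr_neq0_factors[].
rewrite (fsumT_exchange (P := Q) (Q := P)) //; last first.
  move=> t s /mulr_neq0_factors[/mulr_neq0_factors[bs0 ds0] _].
  by split=> //; exists s => //; exists (s^-1 * t)%g; rewrite ?mulVKg.
apply: eq_fsbigr => s _; rewrite -fsumTMl; last first.
  by apply: sub_finite_set (fd (g * s)%g) => u /mulr_neq0_factors[].
rewrite (fsumT_mulg _ s); apply: eq_fsbigr => u _.
by rewrite mulrA mulKg invgM !mulgA.
Qed.

Lemma mul2_1l b : mul2 (gr2_const (@gr_one k G)) b = b.
Proof.
apply/funext => g; apply/funext => h; rewrite /mul2 (fsumT_delta (s := 1%g)).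
  by rewrite /gr2_const /gr_one eqxx mul1r mulg1 invg1 mul1g.
by move=> t /negbTE t1; rewrite /gr2_const /gr_one t1 mul0r.
Qed.

Lemma mul2_1r b : mul2 b (gr2_const (@gr_one k G)) = b.
Proof.
apply/funext => g; apply/funext => h; rewrite /mul2 (fsumT_delta (s := h)).
  by rewrite /gr2_const /gr_one mulVg eqxx mulr1.
by move=> t th; rewrite /gr2_const /gr_one mulg_eq1 eqg_inv (negbTE th) mulr0.
Qed.

Lemma mul2_const a c : mul2 (gr2_const a) (gr2_const c) = gr2_const (gr_mul a c).
Proof. by []. Qed.

Lemma gr2_const_inj : injective gr2_const.
Proof. by move=> a c /(congr1 (@^~ 1%g)). Qed.

Lemma gr2_const_add a c : gr2_const (gr_add a c) = gr2_add (gr2_const a) (gr2_const c).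
Proof. by []. Qed.

Lemma gr_mulA a a' c : fsupp a -> fsupp a' ->
  gr_mul (gr_mul a a') c = gr_mul a (gr_mul a' c).
Proof.
by move=> fa fa'; apply: gr2_const_inj; rewrite -!mul2_const mul2A.
Qed.

Lemma gr_mulDl a a' c : fsupp a -> fsupp a' ->
  gr_mul (gr_add a a') c = gr_add (gr_mul a c) (gr_mul a' c).
Proof.
move=> fa fa'; apply: gr2_const_inj.
by rewrite gr2_const_add -!mul2_const mul2Dl.
Qed.

Lemma gr_mulDr a c c' : fsupp a ->
  gr_mul a (gr_add c c') = gr_add (gr_mul a c) (gr_mul a c').
Proof.
move=> fa; apply: gr2_const_inj.
by rewrite !gr2_const_add -!mul2_const mul2Dr.
Qed.

Lemma gr_mul1l a : gr_mul (@gr_one k G) a = a.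
Proof. by apply: gr2_const_inj; rewrite -mul2_const mul2_1l. Qed.

Lemma gr_mul1r a : gr_mul a (@gr_one k G) = a.
Proof. by apply: gr2_const_inj; rewrite -mul2_const mul2_1r. Qed.

End TwistedConvolution.

Section Closure.
Variables (k : pzRingType) (G : groupType).
Implicit Types (a c : G -> k) (b d : G -> G -> k).

Lemma fsupp_gr_zero : fsupp (@gr_zero k G).
Proof. by apply: (@sub_finite_set _ _ set0) => // g /=; rewrite /gr_zero eqxx. Qed.

Lemma fsupp_gr_one : fsupp (@gr_one k G).
Proof.
apply: (@sub_finite_set _ _ [set 1%g]) => [g|]; last exact: finite_set1.
by rewrite /= /gr_one; case: ifP => [/eqP|_]; rewrite ?eqxx.
Qed.

Lemma fsupp_gr_add a c : fsupp a -> fsupp c -> fsupp (gr_add a c).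
Proof.
move=> fa fc; apply: sub_finite_set (supp_add_sub (f := a) (g := c)) _.
by rewrite finite_setU.
Qed.

Lemma fsupp_gr_opp a : fsupp a -> fsupp (gr_opp a).
Proof. by apply: sub_finite_set => g /=; rewrite /gr_opp oppr_eq0. Qed.

Lemma fsupp_gr_mul a c : fsupp a -> fsupp c -> fsupp (gr_mul a c).
Proof. by move=> fa fc; apply: (fsupp_conv (f := fun=> c)). Qed.

Lemma fsupp2_zero : fsupp2 (@gr2_zero k G).
Proof.
split=> [|g]; last exact: fsupp_gr_zero.
by apply: (@sub_finite_set _ _ set0) => // g /= [h]; rewrite /gr2_zero eqxx.
Qed.

Lemma fsupp2_add b d : fsupp2 b -> fsupp2 d -> fsupp2 (gr2_add b d).
Proof.
move=> [fb fb_g] [fd fd_g]; split=> [|g]; last exact: fsupp_gr_add.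
apply: (@sub_finite_set _ _ ([set g | exists h, b g h != 0] `|`
  [set g | exists h, d g h != 0])); last by rewrite finite_setU.
by move=> g /= [h /(@supp_add_sub _ _ (b g) (d g) h)[bgh|dgh]]; [left|right]; exists h.
Qed.

Lemma fsupp2_opp b : fsupp2 b -> fsupp2 (gr2_opp b).
Proof.
move=> [fb fb_g]; split=> [|g]; last exact: fsupp_gr_opp.
by apply: sub_finite_set fb => g /= [h]; rewrite /gr2_opp oppr_eq0; exists h.
Qed.

Lemma fsupp2_lact a b : fsupp a -> fsupp2 b -> fsupp2 (lact a b).
Proof.
move=> fa [fb fb_g]; split=> [|g]; last first.
  exact: (fsupp_conv (f := fun t => b (g * t)%g)).
apply: (@sub_finite_set _ _ [set (x * t^-1)%g | x in [set g | exists h, b g h != 0]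
  & t in [set t | a t != 0]]); last exact: finite_image2.
move=> g /= [h /fsum_neq0[t _ /mulr_neq0_factors[at0 bt0]]].
by exists (g * t)%g; [exists (t^-1 * h)%g | exists t; rewrite ?mulgK].
Qed.

Lemma fsupp2_mul2 b d : fsupp2 b -> row_fsupp d -> fsupp2 (mul2 b d).
Proof.
move=> [fb fb_g] fd; split; last exact: row_fsupp_mul2.
apply: sub_finite_set fb => g /= [h /fsum_neq0[t _ /mulr_neq0_factors[bt0 _]]].
by exists t.
Qed.

End Closure.

Section D1Ring.
Variables (k : pzRingType) (G : groupType).
Implicit Types x y z : D1 k G.

Definition D1_embed x : G -> G -> k := gr2_add (gr2_const x.1) x.2.

Lemma D1_ext x y :
  (forall g, x.1 g = y.1 g) -> (forall g h, x.2 g h = y.2 g h) -> x = y.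
Proof.
case: x y => [a b] [c d] /= ac bd; congr pair; apply/funext => g //.
by apply/funext => h.
Qed.

Lemma D1_embed_inj x y : x.1 = y.1 -> D1_embed x = D1_embed y -> x = y.
Proof.
move=> xy1 xy; apply: D1_ext => [g|g h]; first by rewrite xy1.
have := congr1 (fun b => b g h) xy.
by rewrite /D1_embed /gr2_add /gr2_const xy1 => /addrI.
Qed.

Lemma row_fsupp_D1_embed x : inD1 x -> row_fsupp (D1_embed x).
Proof. by move=> [fx1 [_ fx2]] g; apply: fsupp_gr_add. Qed.

Lemma D1_embed_one : D1_embed (D1_one k G) = gr2_const (@gr_one k G).
Proof. by apply/funext => g; apply/funext => h; rewrite /D1_embed /gr2_add addr0. Qed.

Lemma D1_embed_add x y :
  D1_embed (D1_add x y) = gr2_add (D1_embed x) (D1_embed y).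
Proof. by apply/funext => g; apply/funext => h; rewrite /D1_embed /gr2_add addrACA. Qed.

Lemma D1_embed_mul x y : inD1 x ->
  D1_embed (D1_mul x y) = mul2 (D1_embed x) (D1_embed y).
Proof.
case: x y => [a b] [c d] [/= fa [_ fb]].
rewrite /D1_embed /= mul2Dl // !mul2Dr //.
by apply/funext => g; apply/funext => h; rewrite /gr2_add !addrA.
Qed.

Lemma inD1_zero : inD1 (D1_zero k G).
Proof. by split; [exact: fsupp_gr_zero | exact: fsupp2_zero]. Qed.

Lemma inD1_one : inD1 (D1_one k G).
Proof. by split; [exact: fsupp_gr_one | exact: fsupp2_zero]. Qed.

Lemma inD1_add x y : inD1 x -> inD1 y -> inD1 (D1_add x y).
Proof.
by move=> [fx1 fx2] [fy1 fy2]; split; [exact: fsupp_gr_add | exact: fsupp2_add].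
Qed.

Lemma inD1_opp x : inD1 x -> inD1 (D1_opp x).
Proof. by move=> [fx1 fx2]; split; [exact: fsupp_gr_opp | exact: fsupp2_opp]. Qed.

Lemma inD1_mul x y : inD1 x -> inD1 y -> inD1 (D1_mul x y).
Proof.
move=> [fx1 fx2] [fy1 fy2]; split; first exact: fsupp_gr_mul.
apply: fsupp2_add; first apply: fsupp2_add.
- exact: fsupp2_lact.
- exact: (fsupp2_mul2 (d := gr2_const y.1) fx2 (fun=> fy1)).
- exact: fsupp2_mul2 fx2 fy2.2.
Qed.

Lemma D1_addA x y z : D1_add x (D1_add y z) = D1_add (D1_add x y) z.
Proof. by apply: D1_ext => *; rewrite /= /gr_add /gr2_add addrA. Qed.

Lemma D1_addC x y : D1_add x y = D1_add y x.
Proof. by apply: D1_ext => *; rewrite /= /gr_add /gr2_add addrC. Qed.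

Lemma D1_add0l x : D1_add (D1_zero k G) x = x.
Proof. by apply: D1_ext => *; rewrite /= /gr_add /gr2_add add0r. Qed.

Lemma D1_addNl x : D1_add (D1_opp x) x = D1_zero k G.
Proof. by apply: D1_ext => *; rewrite /= /gr_add /gr2_add addNr. Qed.

Lemma D1_mulA x y z : inD1 x -> inD1 y ->
  D1_mul x (D1_mul y z) = D1_mul (D1_mul x y) z.
Proof.
move=> xD yD; apply: D1_embed_inj.
  by rewrite /= gr_mulA //; [case: xD | case: yD].
have xyD := inD1_mul xD yD.
by rewrite !D1_embed_mul // mul2A //; exact: row_fsupp_D1_embed.
Qed.

Lemma D1_mul1l x : D1_mul (D1_one k G) x = x.
Proof.
apply: D1_embed_inj; first exact: gr_mul1l.
by have oneD := inD1_one; rewrite D1_embed_mul // D1_embed_one mul2_1l.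
Qed.

Lemma D1_mul1r x : inD1 x -> D1_mul x (D1_one k G) = x.
Proof.
move=> xD; apply: D1_embed_inj; first exact: gr_mul1r.
by rewrite D1_embed_mul // D1_embed_one mul2_1r.
Qed.

Lemma D1_mulDl x y z : inD1 x -> inD1 y ->
  D1_mul (D1_add x y) z = D1_add (D1_mul x z) (D1_mul y z).
Proof.
move=> xD yD; apply: D1_embed_inj.
  by rewrite /= gr_mulDl //; [case: xD | case: yD].
have xyD := inD1_add xD yD.
rewrite D1_embed_add !D1_embed_mul // D1_embed_add.
by rewrite mul2Dl //; exact: row_fsupp_D1_embed.
Qed.

Lemma D1_mulDr x y z : inD1 x ->
  D1_mul x (D1_add y z) = D1_add (D1_mul x y) (D1_mul x z).
Proof.
move=> xD; apply: D1_embed_inj; first by rewrite /= gr_mulDr //; case: xD.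
rewrite D1_embed_add !D1_embed_mul // D1_embed_add.
by rewrite mul2Dr //; exact: row_fsupp_D1_embed.
Qed.

End D1Ring.

Theorem lemma5p2 (G : groupType) (k : pzRingType) : D1_is_ring k G.
Proof.
split; first exact: inD1_zero.
split; first exact: inD1_one.
split; first exact: inD1_add.
split; first exact: inD1_opp.
split; first exact: inD1_mul.
split; first by move=> x y z _ _ _; apply: D1_addA.
split; first by move=> x y _ _; apply: D1_addC.
split; first by move=> x _; apply: D1_add0l.
split; first by move=> x _; apply: D1_addNl.
split; first by move=> x y z xD yD _; apply: D1_mulA.
split; first by move=> x _; apply: D1_mul1l.
split; first exact: D1_mul1r.
split; first by move=> x y z xD yD _; apply: D1_mulDl.
by move=> x y z xD _ _; apply: D1_mulDr.
Qed.
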